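(* Under the standing setup, define $$D^+_{MOB}=\frac{\mathbb E[\min\{Y_N-\underline Y(1-X_N),\,\overline Y X_N\}]-\mathbb E[X]\,\mathbb E[Y]}{\mathrm{Var}(X)},\qquad D^-_{MOB}=\frac{\mathbb E[Y](1-\mathbb E[X])-\mathbb E[\min\{Y_N-\underline Y X_N,\,\overline Y(1-X_N)\}]}{\mathrm{Var}(X)}.$$ Then $D\in[D^-_{MOB},D^+_{MOB}]$, and this bound is sharp (absent additional information).
   Context: Let $(X,Y,N)$ be a random triple with $X\in\{0,1\}$, $Y$ real-valued, $N$ taking values in a finite set $\mathcal N$. Write $p_n=\Pr(N=n)$, $X_n=\mathbb E[X\mid N=n]$, $Y_n=\mathbb E[Y\mid N=n]$, $X_N=\mathbb E[X\mid N]$, $Y_N=\mathbb E[Y\mid N]$. Assume some $n$ has $p_n>0$ and $X_n\in(0,1)$. Fix reals $\underline Y\le\overline Y$ and assume $\mathbb E[Y\mid X=x,N=n]\in[\underline Y,\overline Y]$ whenever $\Pr(X=x,N=n)>0$. $D=\mathbb E[Y\mid X=1]-\mathbb E[Y\mid X=0]$. Observed data: $(p_n,X_n,Y_n)_n$. Sharpness: the parameter lies in the interval for every joint distribution satisfying the standing assumptions, and every value in the interval is attained by some joint distribution of $(X,Y,N)$ with the same observed data satisfying the standing bound. *)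

(* a joint distribution of (X,Y,N) is given by random
   variables X Y : T -> R and N : T -> I (I a finite type) on a probability
   space (T, P). *)
From HB Require Import structures.
From mathcomp Require Import all_boot all_order all_algebra.
From mathcomp Require Import all_classical all_reals all_analysis.
Set Implicit Arguments.
Unset Strict Implicit.
Unset Printing Implicit Defensive.
Import Order.TTheory GRing.Theory Num.Theory.
Local Open Scope ring_scope.
Local Open Scope classical_set_scope.

Section MOB.
Context {R : realType} {d : measure_display} {T : measurableType d}.
Variable P : probability T R.

(* expectation E[f] (real-valued; f is assumed integrable where used) *)
Definition Ex (f : T -> R) : R := fine (\int[P]_x (f x)%:E).
Definition Pr (A : set T) : R := fine (P A).
Definition condE (f : T -> R) (A : set T) : R :=
  Ex (fun t => f t * \1_A t) / Pr A.
Definition Var (f : T -> R) : R := Ex (fun t => (f t - Ex f) ^+ 2).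

Context {I : finType}.
Variables (X Y : T -> R) (N : T -> I).

Definition p_ (n : I) : R := Pr [set t | N t = n].
Definition X_ (n : I) : R := condE X [set t | N t = n].
Definition Y_ (n : I) : R := condE Y [set t | N t = n].

Definition Dpar : R := condE Y [set t | X t = 1] - condE Y [set t | X t = 0].

Variables (Ylo Yhi : R).

Definition DplusMOB : R :=
  (Ex (fun t => Num.min (Y_ (N t) - Ylo * (1 - X_ (N t))) (Yhi * X_ (N t)))
     - Ex X * Ex Y) / Var X.

Definition DminusMOB : R :=
  (Ex Y * (1 - Ex X)
     - Ex (fun t => Num.min (Y_ (N t) - Ylo * X_ (N t)) (Yhi * (1 - X_ (N t)))))
  / Var X.

Definition standing : Prop :=
  [/\ measurable_fun setT X /\ measurable_fun setT Y,
      (forall n : I, measurable [set t | N t = n]) /\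
      (forall t, X t = 0 \/ X t = 1),
      P.-integrable setT (EFin \o Y),
      (exists n : I, 0 < p_ n /\ 0 < X_ n < 1) &
      (forall (x : R) (n : I), (x = 0 \/ x = 1) ->
          0 < Pr [set t | X t = x /\ N t = n] ->
          Ylo <= condE Y [set t | X t = x /\ N t = n] <= Yhi)].
End MOB.

Definition same_observed {R : realType} {I : finType}
  {d : measure_display} {T : measurableType d} (P : probability T R)
  (X Y : T -> R) (N : T -> I)
  {d' : measure_display} {T' : measurableType d'} (P' : probability T' R)
  (X' Y' : T' -> R) (N' : T' -> I) : Prop :=
  forall n : I, [/\ p_ P' N' n = p_ P N n, X_ P' X' N' n = X_ P X N n &
                   Y_ P' Y' N' n = Y_ P Y N n].

(* Everything is read off the finitely many cells {X = x, N = n}.  Write c_xn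
   for the mass of a cell and a_n for the integral of Y over the treated cell
   {X = 1, N = n}; then D = (sum_n a_n - P(X = 1) E[Y]) / Var X.  The observed
   data fix the masses c_xn and the stratum integrals s_n = E[Y; N = n], but
   leave each a_n free in the interval
   [max(Ylo c_1n, s_n - Yhi c_0n), min(s_n - Ylo c_0n, Yhi c_1n)]
   allowed by the bounds on both cells of stratum n.  Summing the endpoints gives
   exactly the numerators of D^-_MOB and D^+_MOB; any intermediate total is
   reached by moving all a_n with a common weight, and is realised by an outcome
   that is constant on each cell. *)

From HB Require Import structures.
From mathcomp Require Import all_boot all_order all_algebra.
From mathcomp Require Import all_classical all_reals all_analysis.
From mathcomp Require Import measurable_realfun ring lra.
Set Implicit Arguments.
Unset Strict Implicit.
Unset Printing Implicit Defensive.
Import Order.TTheory GRing.Theory Num.Theory.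
Local Open Scope ring_scope.
Local Open Scope classical_set_scope.

Section SplitRange.
Context {R : realFieldType} (Ylo Yhi : R).

Definition split_min (c1 c0 s : R) : R := Num.max (Ylo * c1) (s - Yhi * c0).
Definition split_max (c1 c0 s : R) : R := Num.min (s - Ylo * c0) (Yhi * c1).

Lemma split_rangeP (c1 c0 s a : R) :
  reflect (Ylo * c1 <= a <= Yhi * c1 /\ Ylo * c0 <= s - a <= Yhi * c0)
          (split_min c1 c0 s <= a <= split_max c1 c0 s).
Proof.
rewrite /split_min /split_max ge_max le_min.
apply: (iffP idP) => [/andP[/andP[? ?] /andP[? ?]]|[/andP[? ?] /andP[? ?]]].
  by split; apply/andP; split; lra.
by apply/andP; split; apply/andP; split; lra.
Qed.

Lemma mass_mulr_min_upper (c1 c0 s : R) : 0 <= c1 -> 0 <= c0 ->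
  (c1 + c0 = 0 -> s = 0) ->
  (c1 + c0) * Num.min (s / (c1 + c0) - Ylo * (1 - c1 / (c1 + c0)))
                      (Yhi * (c1 / (c1 + c0)))
  = split_max c1 c0 s.
Proof.
move=> c1_ge0 c0_ge0 s0; rewrite /split_max.
have [p0|p_neq0] := eqVneq (c1 + c0) 0.
  rewrite s0 //; have [-> ->] : c1 = 0 /\ c0 = 0 by split; lra.
  by rewrite !(addr0, mul0r, mulr0, subr0) minxx.
rewrite minr_pMr ?addr_ge0 //; congr Num.min; field; exact: p_neq0.
Qed.

Lemma mass_mulr_min_lower (c1 c0 s : R) : 0 <= c1 -> 0 <= c0 ->
  (c1 + c0 = 0 -> s = 0) ->
  (c1 + c0) * Num.min (s / (c1 + c0) - Ylo * (c1 / (c1 + c0)))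
                      (Yhi * (1 - c1 / (c1 + c0)))
  = s - split_min c1 c0 s.
Proof.
move=> c1_ge0 c0_ge0 s0; rewrite /split_min oppr_max addr_minr.
have [p0|p_neq0] := eqVneq (c1 + c0) 0.
  rewrite s0 //; have [-> ->] : c1 = 0 /\ c0 = 0 by split; lra.
  by rewrite !(addr0, mul0r, mulr0, subr0) minxx.
rewrite minr_pMr ?addr_ge0 //; congr Num.min; field; exact: p_neq0.
Qed.

Lemma divfK_scaled (lo hi c a : R) :
  lo * c <= a <= hi * c -> a / c * c = a.
Proof.
have [-> | c_neq0] := eqVneq c 0; last by move=> _; rewrite divfK.
by rewrite !mulr0 => a0; apply/eqP; rewrite eq_le.
Qed.

End SplitRange.

Lemma diff_ratios_eq (R : fieldType) (a b m : R) : m != 0 -> 1 - m != 0 ->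
  a / m - b / (1 - m) = (a - m * (a + b)) / (m * (1 - m)).
Proof. by move=> m_neq0 m_neq1; field; rewrite m_neq0 m_neq1. Qed.

Lemma exists_between_sum (R : realFieldType) (I : finType) (L U : I -> R) (tau : R) :
  (forall n, L n <= U n) -> \sum_n L n <= tau <= \sum_n U n ->
  exists a : I -> R, (forall n, L n <= a n <= U n) /\ \sum_n a n = tau.
Proof.
move=> LU /andP[Ltau tauU].
have [lam /andP[lam_ge0 lam_le1] tauE] : exists2 lam : R, 0 <= lam <= 1 &
    tau = \sum_n L n + lam * (\sum_n U n - \sum_n L n).
  have [gap0|gap_neq0] := eqVneq (\sum_n U n - \sum_n L n) 0.
    by exists 0; [rewrite lexx ler01 | rewrite mul0r addr0; lra].
  have gap_gt0 : 0 < \sum_n U n - \sum_n L n.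
    by rewrite lt0r gap_neq0 subr_ge0 (le_trans Ltau).
  exists ((tau - \sum_n L n) / (\sum_n U n - \sum_n L n)); last by field.
  apply/andP; split; first by apply: divr_ge0; lra.
  by rewrite ler_pdivrMr // mul1r; lra.
exists (fun n => L n + lam * (U n - L n)); split.
  move=> n; have := LU n; rewrite -subr_ge0 => gap_ge0.
  have : lam * (U n - L n) <= U n - L n by rewrite ler_piMl.
  by rewrite lerDl mulr_ge0 //=; lra.
by rewrite big_split /= -mulr_sumr sumrB tauE.
Qed.

Section Expectation.
Context {R : realType} {d : measure_display} {T : measurableType d}.
Variable P : probability T R.
Local Notation integrableR f := (P.-integrable setT (EFin \o f)).

Lemma integrableRD (f g : T -> R) :
  integrableR f -> integrableR g -> integrableR (fun t => f t + g t).
Proof. exact: integrableD. Qed.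

Lemma integrableRZ (c : R) (f : T -> R) :
  integrableR f -> integrableR (fun t => c * f t).
Proof. exact: integrableZl. Qed.

Lemma integrableR_cst (c : R) : integrableR (fun=> c).
Proof. exact: finite_measure_integrable_cst. Qed.

Lemma integrableR_sum (J : Type) (s : seq J) (F : J -> T -> R) :
  (forall j, integrableR (F j)) -> integrableR (fun t => \sum_(j <- s) F j t).
Proof.
move=> iF; elim: s => [|j s ih].
  under eq_fun do rewrite big_nil; exact: integrableR_cst.
under eq_fun do rewrite big_cons; exact: integrableRD.
Qed.

Lemma integrableRM_indic (f : T -> R) (B : set T) :
  integrableR f -> measurable B -> integrableR (fun t => f t * \1_B t).
Proof.
move=> iF mB; apply: (integrableMl measurableT iF) => //.
exists 1; split => // r r_gt1 t _ /=.
by rewrite indicE; case: (t \in B); rewrite ?normr1 ?normr0 ltW // (lt_trans ltr01).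
Qed.

Lemma ExD (f g : T -> R) : integrableR f -> integrableR g ->
  Ex P (fun t => f t + g t) = Ex P f + Ex P g.
Proof. exact: RintegralD. Qed.

Lemma ExZ (c : R) (f : T -> R) : integrableR f ->
  Ex P (fun t => c * f t) = c * Ex P f.
Proof. exact: RintegralZl. Qed.

Lemma Ex_cst (c : R) : Ex P (fun=> c) = c.
Proof.
have := @Rintegral_cst _ _ _ P setT measurableT c.
by rewrite /Rintegral /Ex => ->; rewrite (congr1 fine (probability_setT P)) mulr1.
Qed.

Lemma Ex_sum (J : Type) (s : seq J) (F : J -> T -> R) :
  (forall j, integrableR (F j)) ->
  Ex P (fun t => \sum_(j <- s) F j t) = \sum_(j <- s) Ex P (F j).
Proof.
move=> iF; elim: s => [|j s ih].
  by under eq_fun do rewrite big_nil; rewrite Ex_cst big_nil.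
under eq_fun do rewrite big_cons.
by rewrite ExD ?big_cons ?ih //; exact: integrableR_sum.
Qed.

Lemma Ex_indic (B : set T) : measurable B -> Ex P (fun t => 1 * \1_B t) = Pr P B.
Proof.
by move=> mB; rewrite /Ex /Pr; under eq_integral do rewrite mul1r; rewrite integral_indic ?setIT.
Qed.

End Expectation.

Lemma sumr_pred1 (R : pzSemiRingType) (I : finType) (F : I -> R) (n : I) :
  \sum_m (m == n)%:R * F m = F n.
Proof.
rewrite (bigD1 n) //= eqxx mul1r big1 ?addr0 // => m /negPf ->.
by rewrite mul0r.
Qed.

Lemma indic_preimage1 (R : pzRingType) (T U : eqType) (g : T -> U) (u : U) (t : T) :
  \1_[set t | g t = u] t = (g t == u)%:R :> R.
Proof.
rewrite indicE; have [gtu|neq] := eqVneq (g t) u; first by rewrite mem_set.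
by rewrite memNset //; exact/eqP.
Qed.

Section Cells.
Context {R : realType} {d : measure_display} {T : measurableType d}.
Variable P : probability T R.
Context {I : finType}.
Variables (X : T -> R) (N : T -> I).
Hypothesis mX : measurable_fun setT X.
Hypothesis mN : forall n, measurable [set t | N t = n].
Hypothesis X01 : forall t, X t = 0 \/ X t = 1.
Local Notation integrableR f := (P.-integrable setT (EFin \o f)).

Definition cell (x : R) (n : I) : set T := [set t | X t = x /\ N t = n].
Definition cell_integral (f : T -> R) (x : R) (n : I) : R :=
  Ex P (fun t => f t * \1_(cell x n) t).
Definition cell_mass (x : R) (n : I) : R := Pr P (cell x n).

Lemma measurable_X_eq x : measurable [set t | X t = x].
Proof. by have := mX measurableT (measurable_set1 x); rewrite setTI. Qed.

Lemma measurable_cell x n : measurable (cell x n).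
Proof. exact: measurableI (measurable_X_eq x) (mN n). Qed.

Lemma cell_integral1 x n : cell_integral (fun=> 1) x n = cell_mass x n.
Proof. exact/Ex_indic/measurable_cell. Qed.

Lemma cell_mass_ge0 x n : 0 <= cell_mass x n.
Proof. exact/fine_ge0/measure_ge0. Qed.

Lemma cell_integral_null f x n :
  integrableR f -> cell_mass x n = 0 -> cell_integral f x n = 0.
Proof.
rewrite /cell_mass /Pr => iF mass0.
have Pcell0 : P (cell x n) = 0.
  by rewrite -[P _]fineK ?mass0 //; exact/fin_num_measure/measurable_cell.
have -> : cell_integral f x n = \int[P]_(t in cell x n) f t.
  rewrite Rintegral_mkcond /cell_integral; congr Ex; apply/funext => t.
  by rewrite indicE /patch; case: (t \in cell x n); rewrite ?mulr1 ?mulr0.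
rewrite /Rintegral null_set_integral //; first exact: measurable_cell.
exact: measurable_funS measurableT (@subsetT _ _) (measurable_int _ iF).
Qed.

Lemma indic_cell x n t : \1_(cell x n) t = ((X t == x) && (N t == n))%:R :> R.
Proof.
rewrite indicE; have [/andP[/eqP Xx /eqP Nn]|cellN] := boolP ((X t == x) && (N t == n)).
  by rewrite mem_set.
by rewrite memNset // => -[Xx Nn]; rewrite Xx Nn !eqxx in cellN.
Qed.

Lemma cell_fun_decomp (h : R -> I -> R) t :
  h (X t) (N t) = \sum_n (h 1 n * \1_(cell 1 n) t + h 0 n * \1_(cell 0 n) t).
Proof.
rewrite (bigD1 (N t)) //= big1 => [|n]; last first.
  by rewrite eq_sym => /negPf Nn; rewrite !indic_cell Nn !andbF !mulr0 addr0.
rewrite !indic_cell eqxx !andbT.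
by have [-> | ->] := X01 t;
  rewrite eqxx ?[0 == 1]eq_sym oner_eq0 !(mulr0, mulr1, add0r, addr0).
Qed.

Lemma mul_cell_fun_decomp (f : T -> R) (h : R -> I -> R) :
  (fun t => f t * h (X t) (N t)) = (fun t => \sum_n
    (h 1 n * (f t * \1_(cell 1 n) t) + h 0 n * (f t * \1_(cell 0 n) t))).
Proof.
apply/funext => t; rewrite cell_fun_decomp mulr_sumr.
by apply: eq_bigr => n _; ring.
Qed.

Lemma integrable_mul_indic_cell f x n :
  integrableR f -> integrableR (fun t => f t * \1_(cell x n) t).
Proof. by move=> iF; apply: integrableRM_indic => //; exact: measurable_cell. Qed.

Lemma integrable_mul_cell_fun f h :
  integrableR f -> integrableR (fun t => f t * h (X t) (N t)).
Proof.
move=> iF; rewrite mul_cell_fun_decomp; apply: integrableR_sum => n.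
by apply: integrableRD; apply/integrableRZ/integrable_mul_indic_cell.
Qed.

Lemma Ex_by_cells (g f : T -> R) (h : R -> I -> R) : integrableR f ->
  (forall t, g t = f t * h (X t) (N t)) ->
  Ex P g = \sum_n (h 1 n * cell_integral f 1 n + h 0 n * cell_integral f 0 n).
Proof.
move=> iF gE; have iFc x n := integrable_mul_indic_cell x n iF.
rewrite (funext gE) mul_cell_fun_decomp Ex_sum => [|n]; last first.
  by apply: integrableRD; apply: integrableRZ.
by apply: eq_bigr => n _; rewrite ExD ?ExZ //; apply: integrableRZ.
Qed.

Lemma cell_integral_cell_fun (h : R -> I -> R) x n :
  cell_integral (fun t => h (X t) (N t)) x n = h x n * cell_mass x n.
Proof.
rewrite -cell_integral1 /cell_integral -ExZ; last first.
  exact: integrable_mul_indic_cell (integrableR_cst P 1).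
congr Ex; apply/funext => t; rewrite indicE.
by case: (boolP (t \in cell x n)) => [/set_mem[-> ->]|_]; rewrite ?mulr1 ?mulr0.
Qed.

Lemma integrable_cell_fun (h : R -> I -> R) : integrableR (fun t => h (X t) (N t)).
Proof.
have := @integrable_mul_cell_fun (fun=> 1) h (integrableR_cst P 1).
by under eq_fun do rewrite mul1r.
Qed.

Lemma integrable_X : integrableR X.
Proof. exact: integrable_cell_fun (fun x _ => x). Qed.

Lemma cell_integral_X x n : cell_integral X x n = x * cell_mass x n.
Proof. exact: cell_integral_cell_fun (fun x _ => x) x n. Qed.

Definition stratum_integral (f : T -> R) (n : I) : R :=
  cell_integral f 1 n + cell_integral f 0 n.

Definition treated_mass : R := \sum_n cell_mass 1 n.

Lemma stratum_integral_null f n : integrableR f ->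
  cell_mass 1 n + cell_mass 0 n = 0 -> stratum_integral f n = 0.
Proof.
move=> iF mass0; have := cell_mass_ge0 1 n; have := cell_mass_ge0 0 n => c0 c1.
rewrite /stratum_integral !cell_integral_null ?addr0 //; lra.
Qed.

Lemma Ex_mul_indic_N f n : integrableR f ->
  Ex P (fun t => f t * \1_[set t | N t = n] t) = stratum_integral f n.
Proof.
move=> iF; rewrite (@Ex_by_cells _ f (fun _ m => (m == n)%:R)) // => [|t].
  by rewrite big_split /= !sumr_pred1.
by rewrite indic_preimage1.
Qed.

Lemma p_cells n : p_ P N n = cell_mass 1 n + cell_mass 0 n.
Proof.
rewrite /p_ -Ex_indic // (@Ex_mul_indic_N (fun=> 1) n (integrableR_cst P 1)).
by rewrite /stratum_integral !cell_integral1.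
Qed.

Lemma X_cells n : X_ P X N n = cell_mass 1 n / (cell_mass 1 n + cell_mass 0 n).
Proof.
rewrite /X_ /condE -/(p_ P N n) p_cells Ex_mul_indic_N; last exact: integrable_X.
by rewrite /stratum_integral !cell_integral_X mul1r mul0r addr0.
Qed.

Lemma Y_cells f n : integrableR f ->
  Y_ P f N n = stratum_integral f n / (cell_mass 1 n + cell_mass 0 n).
Proof. by move=> iF; rewrite /Y_ /condE -/(p_ P N n) p_cells Ex_mul_indic_N. Qed.

Lemma cell_mass_sum : \sum_n (cell_mass 1 n + cell_mass 0 n) = 1.
Proof.
rewrite -[RHS](Ex_cst P) (@Ex_by_cells _ (fun=> 1) (fun _ _ => 1)) => [||t].
- by apply: eq_bigr => n _; rewrite !mul1r !cell_integral1.
- exact: integrableR_cst.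
- by rewrite mulr1.
Qed.

Lemma untreated_mass : \sum_n cell_mass 0 n = 1 - treated_mass.
Proof. by rewrite -cell_mass_sum big_split /= addrAC subrr add0r. Qed.

Lemma Ex_stratum_sum f : integrableR f -> Ex P f = \sum_n stratum_integral f n.
Proof.
move=> iF; rewrite (@Ex_by_cells _ f (fun _ _ => 1)) // => [|t].
  by apply: eq_bigr => n _; rewrite !mul1r.
by rewrite mulr1.
Qed.

Lemma Ex_X : Ex P X = treated_mass.
Proof.
rewrite (Ex_stratum_sum integrable_X).
by apply: eq_bigr => n _; rewrite /stratum_integral !cell_integral_X mul1r mul0r addr0.
Qed.

Lemma Var_X : Var P X = treated_mass * (1 - treated_mass).
Proof.
rewrite /Var Ex_X (@Ex_by_cells _ (fun=> 1) (fun x _ => (x - treated_mass) ^+ 2))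
  => [||t]; last by rewrite mul1r.
- rewrite big_split /= -!mulr_sumr.
  under eq_bigr do rewrite cell_integral1.
  under [S in _ + _ * S]eq_bigr do rewrite cell_integral1.
  by rewrite -/treated_mass untreated_mass; ring.
- exact: integrableR_cst.
Qed.

Lemma Ex_mul_indic_X f x : integrableR f -> x = 0 \/ x = 1 ->
  Ex P (fun t => f t * \1_[set t | X t = x] t) = \sum_n cell_integral f x n.
Proof.
move=> iF x01; rewrite (@Ex_by_cells _ f (fun x' _ => (x' == x)%:R)) // => [|t].
  by apply: eq_bigr => n _; case: x01 => ->;
    rewrite eqxx ?[0 == 1]eq_sym oner_eq0 !(mul0r, mul1r, add0r, addr0).
by rewrite indic_preimage1.
Qed.

Lemma condE_X_cells f x : integrableR f -> x = 0 \/ x = 1 ->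
  condE P f [set t | X t = x] = (\sum_n cell_integral f x n) / \sum_n cell_mass x n.
Proof.
move=> iF x01; rewrite /condE -Ex_indic; last exact: measurable_X_eq.
rewrite !Ex_mul_indic_X //; last exact: integrableR_cst.
by under [S in _ / S]eq_bigr do rewrite cell_integral1.
Qed.

Lemma Dpar_cells f : integrableR f -> 0 < treated_mass < 1 ->
  Dpar P X f = (\sum_n cell_integral f 1 n - treated_mass * \sum_n stratum_integral f n)
               / (treated_mass * (1 - treated_mass)).
Proof.
move=> iF /andP[m_gt0 m_lt1].
rewrite /Dpar (condE_X_cells iF (or_intror (erefl 1))).
rewrite (condE_X_cells iF (or_introl (erefl 0))) untreated_mass -/treated_mass.
by rewrite diff_ratios_eq ?big_split ?lt0r_neq0 ?subr_gt0.
Qed.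

Lemma DplusMOB_cells Ylo Yhi f : integrableR f ->
  DplusMOB P X f N Ylo Yhi =
  (\sum_n split_max Ylo Yhi (cell_mass 1 n) (cell_mass 0 n) (stratum_integral f n)
     - treated_mass * \sum_n stratum_integral f n)
  / (treated_mass * (1 - treated_mass)).
Proof.
move=> iF; pose g n := Num.min (Y_ P f N n - Ylo * (1 - X_ P X N n)) (Yhi * X_ P X N n).
have cellE n : g n * cell_integral (fun=> 1) 1 n + g n * cell_integral (fun=> 1) 0 n
    = split_max Ylo Yhi (cell_mass 1 n) (cell_mass 0 n) (stratum_integral f n).
  rewrite !cell_integral1 -mulrDr mulrC /g Y_cells // X_cells.
  by rewrite mass_mulr_min_upper ?cell_mass_ge0 //; exact: stratum_integral_null.
rewrite /DplusMOB Var_X Ex_X (Ex_stratum_sum iF).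
rewrite (@Ex_by_cells _ (fun=> 1) (fun _ => g)) => [||t]; last by rewrite mul1r.
- by rewrite (eq_bigr _ (fun n _ => cellE n)).
- exact: integrableR_cst.
Qed.

Lemma DminusMOB_cells Ylo Yhi f : integrableR f ->
  DminusMOB P X f N Ylo Yhi =
  (\sum_n split_min Ylo Yhi (cell_mass 1 n) (cell_mass 0 n) (stratum_integral f n)
     - treated_mass * \sum_n stratum_integral f n)
  / (treated_mass * (1 - treated_mass)).
Proof.
move=> iF; pose g n := Num.min (Y_ P f N n - Ylo * X_ P X N n) (Yhi * (1 - X_ P X N n)).
have cellE n : g n * cell_integral (fun=> 1) 1 n + g n * cell_integral (fun=> 1) 0 n
    = stratum_integral f n
      - split_min Ylo Yhi (cell_mass 1 n) (cell_mass 0 n) (stratum_integral f n).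
  rewrite !cell_integral1 -mulrDr mulrC /g Y_cells // X_cells.
  by rewrite mass_mulr_min_lower ?cell_mass_ge0 //; exact: stratum_integral_null.
rewrite /DminusMOB Var_X Ex_X (Ex_stratum_sum iF).
rewrite (@Ex_by_cells _ (fun=> 1) (fun _ => g)) => [||t]; last by rewrite mul1r.
- by rewrite (eq_bigr _ (fun n _ => cellE n)) sumrB; congr (_ / _); ring.
- exact: integrableR_cst.
Qed.

Lemma treated_mass_in_01 :
  (exists n, 0 < p_ P N n /\ 0 < X_ P X N n < 1) -> 0 < treated_mass < 1.
Proof.
case=> n [p_gt0]; rewrite p_cells in p_gt0; rewrite X_cells.
rewrite ltr_pdivlMr // ltr_pdivrMr // mul0r mul1r => /andP[c1_gt0 c1_lt].
have term_le_sum (F : I -> R) : (forall i, 0 <= F i) -> F n <= \sum_i F i.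
  by move=> F_ge0; rewrite (bigD1 n) //= lerDl sumr_ge0.
have := term_le_sum _ (cell_mass_ge0 1); have := term_le_sum _ (cell_mass_ge0 0).
rewrite untreated_mass -/treated_mass => *; apply/andP; split; lra.
Qed.

Lemma cell_bounds_condP f Ylo Yhi x n : integrableR f ->
  (0 < cell_mass x n -> Ylo <= condE P f (cell x n) <= Yhi) <->
  Ylo * cell_mass x n <= cell_integral f x n <= Yhi * cell_mass x n.
Proof.
move=> iF; rewrite /condE -/(cell_mass x n) -/(cell_integral f x n).
have [mass0 | mass_neq0] := eqVneq (cell_mass x n) 0.
  by rewrite mass0 cell_integral_null // !mulr0 lexx ltxx.
have mass_gt0 : 0 < cell_mass x n by rewrite lt0r mass_neq0 cell_mass_ge0.
by rewrite ler_pdivlMr // ler_pdivrMr //; split => //; apply.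
Qed.

Lemma standing_split_rangeP Y Ylo Yhi :
  measurable_fun setT Y -> integrableR Y ->
  (exists n, 0 < p_ P N n /\ 0 < X_ P X N n < 1) ->
  standing P X Y N Ylo Yhi <-> forall n,
    split_min Ylo Yhi (cell_mass 1 n) (cell_mass 0 n) (stratum_integral Y n)
    <= cell_integral Y 1 n
    <= split_max Ylo Yhi (cell_mass 1 n) (cell_mass 0 n) (stratum_integral Y n).
Proof.
move=> mY iY ex_n.
have stratumB n : stratum_integral Y n - cell_integral Y 1 n = cell_integral Y 0 n.
  by rewrite /stratum_integral addrC addKr.
split=> [[_ _ _ _ Ybounds] n | Yrange].
  apply/split_rangeP; rewrite stratumB.
  by split; apply/(cell_bounds_condP _ _ _ _ iY)/Ybounds; [right|left].
split=> // x n x01; apply/(cell_bounds_condP _ _ _ _ iY).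
have /split_rangeP[] := Yrange n; rewrite stratumB.
by case: x01 => ->.
Qed.

Lemma realize_split Ylo Yhi (s a : I -> R) :
  (forall n, split_min Ylo Yhi (cell_mass 1 n) (cell_mass 0 n) (s n) <= a n
             <= split_max Ylo Yhi (cell_mass 1 n) (cell_mass 0 n) (s n)) ->
  exists Y' : T -> R, [/\ measurable_fun setT Y', integrableR Y',
    forall n, cell_integral Y' 1 n = a n &
    forall n, cell_integral Y' 0 n = s n - a n].
Proof.
move=> a_range.
pose h (x : R) n := if x == 1 then a n / cell_mass 1 n else (s n - a n) / cell_mass 0 n.
have iY' := integrable_cell_fun h.
exists (fun t => h (X t) (N t)); split => // [|n|n].
- by apply/measurable_EFinP; exact: measurable_int iY'.
- have /split_rangeP[a1 _] := a_range n.
  by rewrite cell_integral_cell_fun /h eqxx (divfK_scaled a1).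
- have /split_rangeP[_ a0] := a_range n.
  by rewrite cell_integral_cell_fun /h eq_sym oner_eq0 (divfK_scaled a0).
Qed.

Lemma Dpar_in_mob_bounds Y Ylo Yhi : standing P X Y N Ylo Yhi ->
  DminusMOB P X Y N Ylo Yhi <= Dpar P X Y <= DplusMOB P X Y N Ylo Yhi.
Proof.
move=> hst; have [[_ mY] _ iY ex_n _] := hst.
have m01 := treated_mass_in_01 ex_n; have /andP[m_gt0 m_lt1] := m01.
have Y_range := (standing_split_rangeP Ylo Yhi mY iY ex_n).1 hst.
rewrite DminusMOB_cells // DplusMOB_cells // Dpar_cells //.
rewrite !ler_pM2r ?invr_gt0 ?mulr_gt0 ?subr_gt0 // !lerD2r.
by apply/andP; split; apply: ler_sum => n _; have /andP[] := Y_range n.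
Qed.

Lemma mob_bounds_sharp Y Ylo Yhi v : standing P X Y N Ylo Yhi ->
  DminusMOB P X Y N Ylo Yhi <= v <= DplusMOB P X Y N Ylo Yhi ->
  exists Y' : T -> R, [/\ standing P X Y' N Ylo Yhi,
    forall n, Y_ P Y' N n = Y_ P Y N n & Dpar P X Y' = v].
Proof.
move=> hst; have [[_ mY] _ iY ex_n _] := hst.
have m01 := treated_mass_in_01 ex_n; have /andP[m_gt0 m_lt1] := m01.
have Y_range := (standing_split_rangeP Ylo Yhi mY iY ex_n).1 hst.
have V_gt0 : 0 < treated_mass * (1 - treated_mass) by rewrite mulr_gt0 ?subr_gt0.
rewrite DminusMOB_cells // DplusMOB_cells // ler_pdivrMr // ler_pdivlMr //.
move=> /andP[lo hi].
pose tau := v * (treated_mass * (1 - treated_mass))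
            + treated_mass * \sum_n stratum_integral Y n.
have [a [a_range a_sum]] : exists a : I -> R, (forall n,
    split_min Ylo Yhi (cell_mass 1 n) (cell_mass 0 n) (stratum_integral Y n) <= a n
    <= split_max Ylo Yhi (cell_mass 1 n) (cell_mass 0 n) (stratum_integral Y n))
    /\ \sum_n a n = tau.
  apply: exists_between_sum => [n|]; first by have /andP[/le_trans] := Y_range n; apply.
  by apply/andP; split; rewrite /tau; lra.
have [Y' [mY' iY' Y'1 Y'0]] := realize_split a_range.
have Y'_stratum n : stratum_integral Y' n = stratum_integral Y n.
  by rewrite /stratum_integral Y'1 Y'0 addrC subrK.
exists Y'; split.
- by apply/(standing_split_rangeP Ylo Yhi mY' iY' ex_n) => n; rewrite Y'_stratum Y'1.
- by move=> n; rewrite !Y_cells // Y'_stratum.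
rewrite Dpar_cells // (eq_bigr _ (fun n _ => Y'1 n)) a_sum.
under eq_bigr do rewrite Y'_stratum.
by rewrite /tau; field; rewrite !lt0r_neq0 ?subr_gt0.
Qed.

End Cells.

Theorem proposition3 (R : realType) (I : finType)
  (d : measure_display) (T : measurableType d) (P : probability T R)
  (X Y : T -> R) (N : T -> I) (Ylo Yhi : R) :
  Ylo <= Yhi ->
  standing P X Y N Ylo Yhi ->
  (DminusMOB P X Y N Ylo Yhi <= Dpar P X Y <= DplusMOB P X Y N Ylo Yhi) /\
  (forall v : R,
     DminusMOB P X Y N Ylo Yhi <= v <= DplusMOB P X Y N Ylo Yhi ->
     exists (d' : measure_display) (T' : measurableType d')
            (P' : probability T' R) (X' Y' : T' -> R) (N' : T' -> I),
       [/\ standing P' X' Y' N' Ylo Yhi,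
           same_observed P X Y N P' X' Y' N' &
           Dpar P' X' Y' = v]).
Proof.
move=> _ hst; have [[mX _] [mN X01] _ _ _] := hst.
split; first exact: (Dpar_in_mob_bounds mX mN X01 hst).
move=> v /(mob_bounds_sharp mX mN X01 hst) [Y' [hst' sameY Dv]].
by exists d, T, P, X, Y', N; split => // n; split; rewrite ?sameY.
Qed.
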